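(* Consider the formal power series in $q$ \[ K(q) = \frac{2 J_{20}^{15} J_{6,20} J_{10,20}}{J_{1,20}^2 J_{2,20} J_{3,20}^3 J_{5,20}^2 J_{7,20}^3 J_{8,20}^2 J_{9,20}^2} + \sum_{n=-\infty}^{\infty} \frac{(-1)^n q^{10n^2+15n+4}}{1+q^{10n+6}}, \] where each summand is expanded as a power series in $q$ (for terms where $m=10n+6<0$, one writes $\frac{1}{1+q^{m}} = \frac{q^{-m}}{1+q^{-m}}$). Then every coefficient of $q^N$, $N\ge 0$, in $K(q)$ is strictly positive.
   Context: Notation: $(a;q)_\infty = \prod_{i\ge 0}(1-aq^i)$ and $(a_1,\dots,a_k;q)_\infty = (a_1;q)_\infty\cdots(a_k;q)_\infty$. For positive integers $a<b$: $J_b = (q^b;q^b)_\infty$ and $J_{a,b} = (q^a, q^{b-a}, q^b; q^b)_\infty$. *)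

(* Formal power series in q with integer coefficients are
   handled through their truncations: the coefficient of q^N of a series is
   computed from {poly int} representatives that agree with the series up to
   degree N. *)
From HB Require Import structures.
From mathcomp Require Import all_boot all_order all_algebra.
Set Implicit Arguments. Unset Strict Implicit. Unset Printing Implicit Defensive.
Import Order.TTheory GRing.Theory Num.Theory.
Local Open Scope ring_scope.

(* (q^b;q^b)_oo = prod_{i>=0} (1 - q^(b(i+1))), truncated to the factors that
   can affect coefficients of degree <= N (factors i >= N+1 are 1 mod q^(N+1)). *)
Definition Jpoly (N b : nat) : {poly int} :=
  \prod_(i < N.+1) (1 - 'X^(b * i.+1)).

(* J_{a,b} = (q^a, q^(b-a), q^b; q^b)_oo, truncated likewise (0 < a < b). *)
Definition Jabpoly (N a b : nat) : {poly int} :=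
  \prod_(i < N.+1)
     ((1 - 'X^(a + b * i)) * (1 - 'X^((b - a) + b * i)) * (1 - 'X^(b + b * i))).

(* Inverse modulo q^(N+1) of a series p with constant term 1:
   1/p = sum_{k>=0} (1 - p)^k, and (1-p)^k = 0 mod q^(N+1) for k > N. *)
Definition inv_trunc (N : nat) (p : {poly int}) : {poly int} :=
  \sum_(k < N.+1) (1 - p) ^+ k.

Definition sum_term (N : nat) (n : int) : {poly int} :=
  let e : int := 10 * n ^+ 2 + 15 * n + 4 in
  let m : int := 10 * n + 6 in
  (-1) ^+ (absz n) *
  (if 0 < m then 'X^(absz e) * inv_trunc N (1 + 'X^(absz m))
   else 'X^(absz (e - m)) * inv_trunc N (1 + 'X^(absz m))).

(* Only the summands with -(N+1) <= n <= N can contribute to degrees <= N. *)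
Definition Ksum (N : nat) : {poly int} :=
  \sum_(i < (N.+1).*2) sum_term N (i%:Z - (N.+1)%:Z).

Definition Kprod (N : nat) : {poly int} :=
  2%:R * Jpoly N 20 ^+ 15 * Jabpoly N 6 20 * Jabpoly N 10 20 *
  inv_trunc N (Jabpoly N 1 20 ^+ 2 * Jabpoly N 2 20 * Jabpoly N 3 20 ^+ 3 *
               Jabpoly N 5 20 ^+ 2 * Jabpoly N 7 20 ^+ 3 * Jabpoly N 8 20 ^+ 2 *
               Jabpoly N 9 20 ^+ 2).

Definition Kcoef (N : nat) : int := (Kprod N + Ksum N)`_N.

(* Write [r] for (q^r; q^20)_oo.  After cancelling J_20^15, the product is
   2 [6][14][10]^2[20]^2 divided by
   [1]^2[2][3]^3[5]^2[7]^3[8]^2[9]^2[11]^2[12]^2[13]^3[15]^2[17]^3[18][19]^2.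
   Each numerator factor splits off denominator factors times a series with
   nonnegative coefficients: [2a] = [a][b] (-q^a, -q^b; q^20)_oo when 2b = 2a + 20,
   and [20] = ([a][b])^2 R(a,b) R(a,b+20) / (1 - q^b) when a + b = 20, where R(a,b)
   is the product over i of (1 - q^(a+b+40i)) / ((1 - q^(a+20i)) (1 - q^(b+20i)))
   and (1 - xy) / ((1 - x)(1 - y)) = 1/(1 - x) + y/(1 - y).  Taking (a,b) = (3,13),
   (5,15) twice, (7,17), then (3,17) and (9,11), the denominator left over is
   [1]^2[2][7]^2[8]^2[12]^2[13]^2[18][19]^2, whose inverse has nonnegative
   coefficients and contains 1/(1 - q)^2.  So the coefficient of q^N in the product
   is at least 2(N+1), while each summand of the sum contributes -1, 0 or 1 to it
   and at most 2N+1 of them reach degree N.  All identities are taken modulo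
   q^(N+1). *)

From HB Require Import structures.
From mathcomp Require Import all_boot all_order all_algebra.
From mathcomp Require Import zify ring.
Set Implicit Arguments. Unset Strict Implicit. Unset Printing Implicit Defensive.
Import Order.TTheory GRing.Theory Num.Theory.
Local Open Scope ring_scope.

Lemma big_ord_double (R : Type) (idx : R) (op : Monoid.law idx) n (F : nat -> R) :
  \big[op/idx]_(i < n.*2) F i = \big[op/idx]_(i < n) op (F i.*2) (F i.*2.+1).
Proof.
elim: n => [|n IHn]; first by rewrite !big_ord0.
by rewrite doubleS !big_ord_recr /= IHn Monoid.mulmA.
Qed.

Notation eq_upto N p q := (take_poly N.+1 p = take_poly N.+1 q).

Section TruncatedEquality.
Variable R : comNzRingType.
Implicit Types p q : {poly R}.

Lemma take_polyM n p q :
  take_poly n (p * q) = take_poly n (take_poly n p * take_poly n q).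
Proof.
rewrite -{1}(poly_take_drop n p) -{1}(poly_take_drop n q).
set tp := take_poly n p; set tq := take_poly n q.
set dp := drop_poly n p; set dq := drop_poly n q.
have -> : (tp + dp * 'X^n) * (tq + dq * 'X^n) =
          tp * tq + (tp * dq + dp * tq + dp * dq * 'X^n) * 'X^n by ring.
by rewrite take_polyD take_polyMXn_0 addr0.
Qed.

Lemma take_poly_Xn n k : (n <= k)%N -> take_poly n ('X^k : {poly R}) = 0.
Proof. by move=> le_nk; rewrite -(subnK le_nk) exprD take_polyMXn_0. Qed.

Lemma take_poly_expr n (u : {poly R}) : u`_0 = 0 -> take_poly n (u ^+ n) = 0.
Proof.
move=> u0; rewrite -(poly_take_drop 1 u) (_ : take_poly 1 u = 0) ?add0r.
  by rewrite exprMn take_polyMXn_0.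
by apply/polyP => i; rewrite coef_take_poly coef0; case: i => [|i] //=; rewrite u0.
Qed.

Lemma eq_upto_coef N p q k : eq_upto N p q -> (k <= N)%N -> p`_k = q`_k.
Proof.
move=> E le_kN; have := congr1 (fun r : {poly R} => r`_k) E.
by rewrite /= !coef_take_poly ltnS le_kN.
Qed.

Lemma eq_uptoM N p1 p2 q1 q2 :
  eq_upto N p1 q1 -> eq_upto N p2 q2 -> eq_upto N (p1 * p2) (q1 * q2).
Proof. by move=> E1 E2; rewrite take_polyM E1 E2 -take_polyM. Qed.

Lemma eq_uptoD N p1 p2 q1 q2 :
  eq_upto N p1 q1 -> eq_upto N p2 q2 -> eq_upto N (p1 + p2) (q1 + q2).
Proof. by move=> E1 E2; rewrite !take_polyD E1 E2. Qed.

Lemma eq_uptoX N p q n : eq_upto N p q -> eq_upto N (p ^+ n) (q ^+ n).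
Proof. by move=> E; elim: n => [|n IHn]; rewrite ?expr0 // !exprS (eq_uptoM E IHn). Qed.

Lemma eq_upto_mulr1 N p q : eq_upto N q 1 -> eq_upto N (p * q) p.
Proof. by move=> E; rewrite take_polyM E -take_polyM mulr1. Qed.

Lemma eq_upto_prod N I (r : seq I) (P : pred I) (F G : I -> {poly R}) :
  (forall i, P i -> eq_upto N (F i) (G i)) ->
  eq_upto N (\prod_(i <- r | P i) F i) (\prod_(i <- r | P i) G i).
Proof.
by apply: (big_ind2 (fun p q => eq_upto N p q)) => // ? ? ? ?; apply: eq_uptoM.
Qed.

Lemma eq_upto_prod1 N I (r : seq I) (P : pred I) (F : I -> {poly R}) :
  (forall i, P i -> eq_upto N (F i) 1) -> eq_upto N (\prod_(i <- r | P i) F i) 1.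
Proof. by move/(eq_upto_prod r) => ->; rewrite big1. Qed.

Lemma eq_upto_subXn N k : (N < k)%N -> eq_upto N (1 - 'X^k : {poly R}) 1.
Proof. by move=> lt_Nk; rewrite linearB /= take_poly_Xn ?subr0. Qed.

End TruncatedEquality.

Lemma mul_inv_trunc N (p : {poly int}) : p`_0 = 1 -> eq_upto N (p * inv_trunc N p) 1.
Proof.
move=> p0; set u := 1 - p.
have -> : p * inv_trunc N p = 1 - u ^+ N.+1.
  by rewrite /inv_trunc -/u -opprB subrX1 /u; ring.
by rewrite linearB /= take_poly_expr ?subr0 // /u coefB coefC p0 subrr.
Qed.

Section NonnegativeCoefficients.
Variable R : numDomainType.
Implicit Types p q : {poly R}.

Definition nonneg_coef p := forall k, 0 <= p`_k.
Definition nonneg1 p := nonneg_coef p /\ p`_0 = 1.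

Lemma nonneg_coefM p q : nonneg_coef p -> nonneg_coef q -> nonneg_coef (p * q).
Proof. by move=> p_ge0 q_ge0 k; rewrite coefM sumr_ge0 // => j _; rewrite mulr_ge0. Qed.

Lemma nonneg1M p q : nonneg1 p -> nonneg1 q -> nonneg1 (p * q).
Proof.
by move=> [p_ge0 p0] [q_ge0 q0]; split; [exact: nonneg_coefM | rewrite coef0M p0 q0 mulr1].
Qed.

Lemma nonneg1_prod I (r : seq I) (P : pred I) (F : I -> {poly R}) :
  (forall i, P i -> nonneg1 (F i)) -> nonneg1 (\prod_(i <- r | P i) F i).
Proof.
move=> F_ge0; apply: big_ind => //; last exact: nonneg1M.
by split=> [k|]; rewrite coefC //; case: eqP.
Qed.

Lemma nonneg1X p n : nonneg1 p -> nonneg1 (p ^+ n).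
Proof. by move=> p_ge0; rewrite -[n]card_ord -prodr_const; apply: nonneg1_prod. Qed.

Lemma nonneg1_1addXn n : (0 < n)%N -> nonneg1 (1 + 'X^n).
Proof.
move=> n_gt0; split=> [k|]; rewrite coefD coefC coefXn.
  by rewrite addr_ge0 //; case: eqP.
by rewrite eqxx eq_sym (gtn_eqF n_gt0) addr0.
Qed.

Lemma coef_le_mulr p q k : nonneg_coef p -> nonneg1 q -> p`_k <= (p * q)`_k.
Proof.
move=> p_ge0 [q_ge0 q0]; rewrite coefM big_ord_recr /= subnn q0 mulr1 lerDr.
by apply: sumr_ge0 => j _; apply: mulr_ge0.
Qed.

End NonnegativeCoefficients.

Definition qprod N s r : {poly int} := \prod_(i < N.+1) (1 - 'X^(r + s * i)).
Definition qprod_opp N s r : {poly int} := \prod_(i < N.+1) (1 + 'X^(r + s * i)).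

Lemma Jpoly_qprod N b : Jpoly N b = qprod N b b.
Proof. by apply: eq_bigr => i _; rewrite mulnS. Qed.

Lemma Jabpoly_qprod N a b :
  Jabpoly N a b = qprod N b a * qprod N b (b - a) * qprod N b b.
Proof. by rewrite /Jabpoly !big_split. Qed.

Lemma coef0_qprod N s r : (0 < r)%N -> (qprod N s r)`_0 = 1.
Proof.
move=> r_gt0; rewrite coef0_prod big1 // => i _.
by rewrite coefB coefC coefXn eqxx (_ : 0 == r + s * i = false)%N ?subr0 //; lia.
Qed.

Lemma qprod_split N s r : (0 < s)%N ->
  eq_upto N (qprod N s r) (qprod N s.*2 r * qprod N s.*2 (r + s)).
Proof.
move=> s_gt0.
have -> : qprod N s.*2 r * qprod N s.*2 (r + s) =
          \prod_(i < N.+1 + N.+1) (1 - 'X^(r + s * i)).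
  rewrite addnn (big_ord_double _ _ (fun i => 1 - 'X^(r + s * i))) -big_split.
  by apply: eq_bigr => i _ /=; congr ((1 - 'X^_) * (1 - 'X^_)); lia.
rewrite big_split_ord eq_upto_mulr1 //.
by apply: eq_upto_prod1 => i _; apply: eq_upto_subXn => /=; nia.
Qed.

Lemma qprod_shift N s r : (0 < s)%N ->
  eq_upto N (qprod N s r) ((1 - 'X^r) * qprod N s (r + s)).
Proof.
move=> s_gt0.
have -> : qprod N s r = (1 - 'X^r) * \prod_(i < N) (1 - 'X^(r + s + s * i)).
  rewrite /qprod big_ord_recl muln0 addn0; congr (_ * _).
  by apply: eq_bigr => i _; rewrite lift0 mulnS addnA.
rewrite /qprod big_ord_recr mulrA [RHS]eq_upto_mulr1 //.
by apply: eq_upto_subXn => /=; nia.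
Qed.

Lemma qprod_opp_qprod N s r : qprod_opp N s r * qprod N s r = qprod N s.*2 r.*2.
Proof.
rewrite -big_split; apply: eq_bigr => i _ /=.
by rewrite mulrC -subr_sqr expr1n -exprM; congr (1 - 'X^_); lia.
Qed.

Definition geo N a : {poly int} := inv_trunc N (1 - 'X^a).
Definition qfrac N a b : {poly int} := geo N a + 'X^b * geo N b.

Lemma geoE N a : geo N a = \sum_(k < N.+1) 'X^(a * k).
Proof. by rewrite /geo /inv_trunc subKr; apply: eq_bigr => k _; rewrite exprM. Qed.

Lemma mul_geo N a : (0 < a)%N -> eq_upto N (geo N a * (1 - 'X^a)) 1.
Proof.
move=> a_gt0; rewrite mulrC; apply: mul_inv_trunc.
by rewrite coefB coefC coefXn eqxx eq_sym gtn_eqF ?subr0.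
Qed.

Lemma nonneg1_geo N a : (0 < a)%N -> nonneg1 (geo N a).
Proof.
move=> a_gt0; rewrite geoE; split=> [k|].
  by rewrite coef_sum sumr_ge0 // => j _; rewrite coefXn.
rewrite coef_sum big_ord_recl muln0 coefXn eqxx big1 ?addr0 // => j _.
by rewrite coefXn eq_sym gtn_eqF ?muln_gt0 ?a_gt0.
Qed.

Lemma coef_geo1 N k : (k <= N)%N -> (geo N 1)`_k = 1.
Proof.
have -> : geo N 1 = \poly_(i < N.+1) 1.
  by rewrite geoE poly_def; apply: eq_bigr => i _; rewrite mul1n scale1r.
by rewrite coef_poly ltnS => ->.
Qed.

Lemma coef_geo1_sqr N : (geo N 1 ^+ 2)`_N = N.+1%:R.
Proof.
rewrite expr2 coefM (eq_bigr (fun=> 1)) ?sumr_const ?card_ord // => j _.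
by rewrite !coef_geo1 ?mulr1 ?leq_subr // -ltnS.
Qed.

Lemma mul_qfrac N a b : (0 < a)%N -> (0 < b)%N ->
  eq_upto N (qfrac N a b * ((1 - 'X^a) * (1 - 'X^b))) (1 - 'X^(a + b)).
Proof.
move=> a_gt0 b_gt0.
have -> : qfrac N a b * ((1 - 'X^a) * (1 - 'X^b)) =
  geo N a * (1 - 'X^a) * (1 - 'X^b) + 'X^b * (geo N b * (1 - 'X^b)) * (1 - 'X^a).
  by rewrite /qfrac; ring.
rewrite (eq_uptoD (eq_uptoM (mul_geo N a_gt0) erefl)
  (eq_uptoM (eq_uptoM erefl (mul_geo N b_gt0)) erefl)).
by rewrite exprD; congr take_poly; ring.
Qed.

Lemma nonneg1_qfrac N a b : (0 < a)%N -> (0 < b)%N -> nonneg1 (qfrac N a b).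
Proof.
move=> a_gt0 b_gt0; have [ga_ge0 ga0] := nonneg1_geo N a_gt0.
have [gb_ge0 _] := nonneg1_geo N b_gt0.
split=> [k|]; rewrite coefD coefXnM; last by rewrite b_gt0 ga0 addr0.
by case: ltnP => _; rewrite addr_ge0.
Qed.

Definition geo_prod N s r : {poly int} := \prod_(i < N.+1) geo N (r + s * i).
Definition qfrac_prod N s a b : {poly int} :=
  \prod_(i < N.+1) qfrac N (a + s * i) (b + s * i).

Lemma geo_prod_qprod N s r : (0 < r)%N -> eq_upto N (geo_prod N s r * qprod N s r) 1.
Proof.
by move=> r_gt0; rewrite -big_split; apply: eq_upto_prod1 => i _; apply: mul_geo; lia.
Qed.

Lemma qfrac_prod_qprod N s a b : (0 < a)%N -> (0 < b)%N ->
  eq_upto N (qfrac_prod N s a b * (qprod N s a * qprod N s b)) (qprod N s.*2 (a + b)).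
Proof.
move=> a_gt0 b_gt0; rewrite -!big_split; apply: eq_upto_prod => i _ /=.
by rewrite (_ : a + b + _ = a + s * i + (b + s * i))%N ?mul_qfrac //; lia.
Qed.

Definition dbl_block N s a b := qprod_opp N s a * qprod_opp N s b.
Definition frac_block N s a b := qfrac_prod N s a b * qfrac_prod N s a (b + s) * geo N b.

Lemma qprod_dbl_block N s a b : (0 < s)%N -> (a + a + s = b + b)%N ->
  eq_upto N (qprod N s (a + a)) (qprod N s a * qprod N s b * dbl_block N s a b).
Proof.
move=> s_gt0 Eab; rewrite qprod_split // Eab !addnn -!qprod_opp_qprod.
by congr take_poly; rewrite /dbl_block; ring.
Qed.

Lemma qprod_frac_block N s a b : (0 < a)%N -> (0 < b)%N -> (a + b = s)%N ->
  eq_upto N (qprod N s s) ((qprod N s a * qprod N s b) ^+ 2 * frac_block N s a b).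
Proof.
move=> a_gt0 b_gt0 Eab; have s_gt0 : (0 < s)%N by lia.
have shift_b : eq_upto N (qprod N s b * geo N b) (qprod N s (b + s)).
  rewrite (eq_uptoM (qprod_shift N b s_gt0) erefl) -mulrA mulrCA eq_upto_mulr1 //.
  by rewrite mulrC mul_geo.
have -> : (qprod N s a * qprod N s b) ^+ 2 * frac_block N s a b =
    qfrac_prod N s a b * (qprod N s a * qprod N s b) *
    (qfrac_prod N s a (b + s) * (qprod N s a * (qprod N s b * geo N b))).
  by rewrite /frac_block; ring.
rewrite (eq_uptoM erefl (eq_uptoM erefl (eq_uptoM erefl shift_b))).
rewrite (eq_uptoM (qfrac_prod_qprod N s a_gt0 b_gt0) erefl).
rewrite (eq_uptoM erefl (qfrac_prod_qprod N s a_gt0 (ltn_addr s b_gt0))).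
by rewrite qprod_split // addnA Eab.
Qed.

Lemma nonneg1_qprod_opp N s r : (0 < r)%N -> nonneg1 (qprod_opp N s r).
Proof. by move=> r_gt0; apply: nonneg1_prod => i _; apply: nonneg1_1addXn; lia. Qed.

Lemma nonneg1_geo_prod N s r : (0 < r)%N -> nonneg1 (geo_prod N s r).
Proof. by move=> r_gt0; apply: nonneg1_prod => i _; apply: nonneg1_geo; lia. Qed.

Lemma nonneg1_dbl_block N s a b : (0 < a)%N -> (0 < b)%N -> nonneg1 (dbl_block N s a b).
Proof. by move=> a_gt0 b_gt0; apply: nonneg1M; apply: nonneg1_qprod_opp. Qed.

Lemma nonneg1_frac_block N s a b : (0 < a)%N -> (0 < b)%N -> nonneg1 (frac_block N s a b).
Proof.
move=> a_gt0 b_gt0; have qfrac_ge0 c : (0 < c)%N -> nonneg1 (qfrac_prod N s a c).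
  by move=> c_gt0; apply: nonneg1_prod => i _; apply: nonneg1_qfrac; lia.
by apply: nonneg1M; [apply: nonneg1M; apply: qfrac_ge0; lia | exact: nonneg1_geo].
Qed.

Definition geo_residues := [:: 1; 1; 2; 7; 7; 8; 8; 12; 12; 13; 13; 18; 19; 19]%N.

Definition Knum N :=
  qprod N 20 6 * qprod N 20 10 ^+ 2 * qprod N 20 14 * qprod N 20 20 ^+ 2.
Definition Kden N :=
  \prod_(a <- [:: 1; 1; 2; 3; 3; 3; 5; 5; 7; 7; 7; 8; 8; 9; 9]%N)
     (qprod N 20 a * qprod N 20 (20 - a)).
Definition Kpos N :=
  \prod_(r <- geo_residues) geo_prod N 20 r *
  (dbl_block N 20 3 13 * dbl_block N 20 5 15 ^+ 2 * dbl_block N 20 7 17 *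
   frac_block N 20 3 17 * frac_block N 20 9 11).

Lemma Kden_blocks N : Kden N =
  qprod N 20 3 * qprod N 20 13 * (qprod N 20 5 * qprod N 20 15) ^+ 2 *
  (qprod N 20 7 * qprod N 20 17) * (qprod N 20 3 * qprod N 20 17) ^+ 2 *
  (qprod N 20 9 * qprod N 20 11) ^+ 2 * \prod_(r <- geo_residues) qprod N 20 r.
Proof. by rewrite /Kden /geo_residues !big_cons !big_nil; ring. Qed.

Lemma Knum_Kden N : eq_upto N (Knum N) (Kden N * Kpos N).
Proof.
have geo_part : eq_upto N (\prod_(r <- geo_residues) (geo_prod N 20 r * qprod N 20 r)) 1.
  rewrite big_seq; apply: eq_upto_prod1 => r r_in; apply: geo_prod_qprod.
  by move: r r_in; apply/allP.
have -> : Kden N * Kpos N =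
  qprod N 20 3 * qprod N 20 13 * dbl_block N 20 3 13 *
  (qprod N 20 5 * qprod N 20 15 * dbl_block N 20 5 15) ^+ 2 *
  (qprod N 20 7 * qprod N 20 17 * dbl_block N 20 7 17) *
  ((qprod N 20 3 * qprod N 20 17) ^+ 2 * frac_block N 20 3 17 *
   ((qprod N 20 9 * qprod N 20 11) ^+ 2 * frac_block N 20 9 11)) *
  \prod_(r <- geo_residues) (geo_prod N 20 r * qprod N 20 r).
  by rewrite Kden_blocks /Kpos big_split /=; ring.
rewrite [RHS]eq_upto_mulr1 // /Knum [qprod N 20 20 ^+ 2]expr2.
apply: eq_uptoM; [apply: eq_uptoM; [apply: eq_uptoM |] | apply: eq_uptoM].
- by apply: (@qprod_dbl_block N 20 3 13).
- by apply/eq_uptoX/(@qprod_dbl_block N 20 5 15).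
- by apply: (@qprod_dbl_block N 20 7 17).
- by apply: (@qprod_frac_block N 20 3 17).
- by apply: (@qprod_frac_block N 20 9 11).
Qed.

Lemma Kprod_Knum_Kden N :
  Kprod N = 2%:R * qprod N 20 20 ^+ 15 * Knum N *
            inv_trunc N (qprod N 20 20 ^+ 15 * Kden N).
Proof.
rewrite /Kprod Jpoly_qprod !Jabpoly_qprod /Knum /Kden !big_cons big_nil.
by congr (_ * inv_trunc N _); ring.
Qed.

Lemma coef0_Kden N : (Kden N)`_0 = 1.
Proof.
rewrite /Kden coef0_prod big_seq big1 // => a a_in.
have /andP [a_gt0 a_lt20] : (0 < a < 20)%N.
  by move: a a_in; apply/allP.
by rewrite coef0M !coef0_qprod ?subn_gt0 ?mulr1.
Qed.

Lemma Kprod_Kpos N : eq_upto N (Kprod N) (2%:R * Kpos N).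
Proof.
rewrite Kprod_Knum_Kden (eq_uptoM (eq_uptoM erefl (Knum_Kden N)) erefl).
set D := qprod N 20 20 ^+ 15 * Kden N.
have -> : 2%:R * qprod N 20 20 ^+ 15 * (Kden N * Kpos N) * inv_trunc N D =
          2%:R * Kpos N * (D * inv_trunc N D) by rewrite /D; ring.
rewrite eq_upto_mulr1 // mul_inv_trunc // /D coef0M coef0_Kden mulr1.
by rewrite -[_`_0]/(coefp 0 _) rmorphXn /= coef0_qprod ?expr1n.
Qed.

Lemma coef_Kpos N : N.+1%:R <= (Kpos N)`_N.
Proof.
rewrite /Kpos; set B := (X in _ * X).
have B_ge0 : nonneg1 B.
  by rewrite /B; repeat first [ apply: nonneg1_dbl_block | apply: nonneg1_frac_block
                               | apply: nonneg1X | apply: nonneg1M ].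
have g1_ge0 : nonneg1 (geo_prod N 20 1) by exact: nonneg1_geo_prod.
rewrite /geo_residues 2!big_cons mulrA -mulrA.
apply: le_trans _ (coef_le_mulr N (nonneg1M g1_ge0 g1_ge0).1 _); last first.
  apply: nonneg1M => //; rewrite big_seq; apply: nonneg1_prod => r r_in.
  by apply: nonneg1_geo_prod; move: r r_in; apply/allP.
rewrite /geo_prod big_ord_recl muln0 addn0 mulrACA.
have geo1_ge0 : nonneg1 (geo N 1) by exact: nonneg1_geo.
apply: le_trans _ (coef_le_mulr N (nonneg1M geo1_ge0 geo1_ge0).1 _); last first.
  by apply: nonneg1M; apply: nonneg1_prod => i _; apply: nonneg1_geo.
by rewrite -expr2 coef_geo1_sqr.
Qed.

Lemma coef_inv_trunc_1addXn N M t : (0 < M)%N -> `|(inv_trunc N (1 + 'X^M))`_t| <= 1.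
Proof.
move=> M_gt0; rewrite /inv_trunc opprD addrA subrr add0r coef_sum.
apply: le_trans (ler_norm_sum _ _ _) _.
rewrite (eq_bigr (fun k : 'I_N.+1 => ((t == M * k)%N)%:R)); last first.
  move=> k _; rewrite exprNn -exprM -signr_odd mulr_sign.
  by case: odd; rewrite ?mul1r ?mulN1r ?coefN ?normrN coefXn normr_nat.
have [k0 /eqP t_k0 | no_k] := pickP (fun k : 'I_N.+1 => t == M * k)%N.
  rewrite (bigD1 k0) /= ?t_k0 ?eqxx // big1 ?addr0 // => k k_neq.
  by rewrite eqn_pmul2l // (inj_eq val_inj) eq_sym (negbTE k_neq).
by rewrite big1 // => k _; rewrite no_k.
Qed.

Lemma coef_sum_term N n : `|(sum_term N n)`_N| <= 1.
Proof.
have M_gt0 : (0 < absz (10 * n + 6)%R)%N by rewrite absz_gt0; lia.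
rewrite /sum_term -signr_odd mulr_sign.
by case: odd; rewrite ?coefN ?normrN; case: ifP => _;
   rewrite coefXnM; case: ltnP => _; rewrite ?normr0 ?coef_inv_trunc_1addXn.
Qed.

Lemma coef_sum_term_min N : (sum_term N (- (N.+1)%:Z))`_N = 0.
Proof.
rewrite /sum_term; set n := - (N.+1)%:Z.
have -> : (0 < 10 * n + 6) = false by apply/negbTE; rewrite /n; lia.
set e := 10 * n ^+ 2 + 15 * n + 4 - (10 * n + 6).
have lt_N_e : (N < absz e)%N.
  rewrite -ltz_nat abszE ger0_norm; rewrite /e /n expr2; nia.
by rewrite -signr_odd mulr_sign; case: odd; rewrite ?coefN coefXnM lt_N_e ?oppr0.
Qed.

Lemma coef_Ksum N : `|(Ksum N)`_N| <= (N.*2.+1)%:R.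
Proof.
rewrite /Ksum coef_sum; apply: le_trans (ler_norm_sum _ _ _) _.
rewrite doubleS big_ord_recl /= sub0r coef_sum_term_min normr0 add0r.
apply: le_trans (ler_sum _ (fun i _ => coef_sum_term N _)) _.
by rewrite sumr_const card_ord.
Qed.

Theorem mainTheorem8 (N : nat) : 0 < Kcoef N.
Proof.
rewrite /Kcoef coefD (eq_upto_coef (Kprod_Kpos N) (leqnn N)) mulr_natl coefMn.
have := coef_Ksum N; rewrite ler_norml => /andP [Ksum_ge _].
move: (coef_Kpos N) Ksum_ge; rewrite !natz.
(* lia only treats the coefficients as integer atoms once they are generalized. *)
by move: (Kpos N)`_N (Ksum N)`_N => x y; rewrite mulr2n; lia.
Qed.
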